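(* Assume the setting, construction and assumptions (A1)–(A6) described in the context. Then there are positive constants $M,C,c_3,c_4$ such that $$P\Big(\max_{i\le n}|h(Z_i)-h_0(Z_i)|\ge Ms\sqrt{\tfrac{\log(d\vee n)}{n}}\ \Big|\ Y,X,Z\Big)\le C(d\vee n)^{-c_3}$$ on an event $\mathcal{E}_3$ with $P(\mathcal{E}_3)\ge1-(d\vee n)^{-c_3}$, and $$P\Big(\max_{i\le n}|\phi_i-\phi_{0i}|\ge Ms\sqrt{\tfrac{\log(d\vee n)}{n}}\ \Big|\ Y,X,Z\Big)\le C(d\vee n)^{-c_4}$$ on an event $\mathcal{E}_4$ with $P(\mathcal{E}_4)\ge1-(d\vee n)^{-c_4}$.
   Context: Data: for $i=1,\dots,n$, observations $(Y_i,X_i,Z_i)$ with $Y_i\in\{0,1\}$, $X_i\in\{0,1\}$, $Z_i\in\mathbb{R}^d$. The responses are independently generated from $P(Y_i=1\mid X_i,Z_i)=\frac{\exp(X_i\theta_0+Z_i^T\beta_0)}{1+\exp(X_i\theta_0+Z_i^T\beta_0)}$ with true $\theta_0\in\mathbb{R}$, $\beta_0\in\mathbb{R}^d$; $s$ is the number of nonzero entries of $\beta_0$. $P(X_i=1\mid Z_i)$ is the true propensity score. Write $a\vee b=\max\{a,b\}$. Oracle quantities: with $p_{ik}=\frac{\exp(k\theta_0+Z_i^T\beta_0)}{1+\exp(k\theta_0+Z_i^T\beta_0)}$ for $k\in\{0,1\}$, $R_{0i}=\frac{p_{i0}(1-p_{i0})P(X_i=0\mid Z_i)}{p_{i1}(1-p_{i1})P(X_i=1\mid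 Z_i)}$, $h_0(Z_i)=1/(1+R_{0i})$, $\phi_{0i}=\theta_0h_0(Z_i)+Z_i^T\beta_0$. Construction: priors $\pi(\tilde\theta),\pi(\beta),\pi(\gamma)$. Draw $(\tilde\theta,\beta)$ from $f((\tilde\theta,\beta)\mid Y,X,Z)\propto \pi(\tilde\theta)\pi(\beta)\prod_{i=1}^n\frac{\exp(X_i\tilde\theta+Z_i^T\beta)^{Y_i}}{1+\exp(X_i\tilde\theta+Z_i^T\beta)}$ and $\gamma\in\mathbb{R}^d$ from $f(\gamma\mid X,Z)\propto\pi(\gamma)\prod_{i=1}^n\frac{\exp(Z_i^T\gamma)^{X_i}}{1+\exp(Z_i^T\gamma)}$. Set $P(X_i=1\mid Z_i,\gamma)=\frac{\exp(Z_i^T\gamma)}{1+\exp(Z_i^T\gamma)}$, $q_{ik}=\frac{\exp(k\tilde\theta+Z_i^T\beta)}{1+\exp(k\tilde\theta+Z_i^T\beta)}$, $R_i=\frac{q_{i0}(1-q_{i0})P(X_i=0\mid Z_i,\gamma)}{q_{i1}(1-q_{i1})P(X_i=1\mid Z_i,\gamma)}$, $h(Z_i)=1/(1+R_i)$, $\phi_i=\tilde\theta h(Z_i)+Z_i^T\beta$. The probabilities conditional on $Y,X,Z$ in the claim are with respect to these posterior draws. Assumptions: (A1) $\log d=o(n)$. (A2) $\max_{i,j}|Z_{ij}|\le C$ for some $0<C<\infty$. (A3) $s^2\log(d\vee n)=o(\sqrt n)$. (A4) There are constants $M,C,c_1>0$ and an event $\mathcal{E}_1$ with $P(\mathcal{E}_1)\ge1-(d\vee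 n)^{-c_1}$ on which $P\big(\max\{\|(\tilde\theta,\beta)-(\theta_0,\beta_0)\|_1/s,\ \|(\tilde\theta,\beta)-(\theta_0,\beta_0)\|_2/s^{1/2}\}\ge M\sqrt{\log(d\vee n)/n}\mid Y,X,Z\big)\le C(d\vee n)^{-c_1}$. (A5) There are constants $M,C,c_2>0$ and an event $\mathcal{E}_2$ with $P(\mathcal{E}_2)\ge1-(d\vee n)^{-c_2}$ on which $P\Big(\max_{i\le n}\Big|\log\frac{P(X_i=1\mid Z_i,\gamma)/P(X_i=0\mid Z_i,\gamma)}{P(X_i=1\mid Z_i)/P(X_i=0\mid Z_i)}\Big|\ge M\sqrt{\log(d\vee n)/n}\mid X,Z\Big)\le C(d\vee n)^{-c_2}$. (A6) a prior $\pi(\theta)$ is continuous at $\theta_0$ with $\pi(\theta_0)>0$, and $|\theta_0|\le M_0$ for some $M_0>0$. *)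

From HB Require Import structures.
From mathcomp Require Import all_boot all_order all_algebra.
From mathcomp Require Import all_classical all_reals all_analysis.
Set Implicit Arguments. Unset Strict Implicit. Unset Printing Implicit Defensive.
Import Order.TTheory GRing.Theory Num.Theory.
Import numFieldNormedType.Exports.
Local Open Scope classical_set_scope.
Local Open Scope ring_scope.

Section Defs.
Variable R : realType.

Definition lin (d : nat) (z b : 'I_d -> R) : R := \sum_(j < d) z j * b j.

Definition logistic (u : R) : R := expR u / (1 + expR u).

Definition b2R (b : bool) : R := (b : nat)%:R.

Definition odds (p : R) : R := p / (1 - p).

(* h(z) = 1/(1+R) with q_k = logistic(k th + z^T b), e = P(X=1|Z=z):
   R = q0(1-q0)(1-e) / (q1(1-q1) e). *)
Definition hfun (d : nat) (th : R) (b : 'I_d -> R) (e : R) (z : 'I_d -> R) : R :=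
  let q0 := logistic (lin z b) in
  let q1 := logistic (th + lin z b) in
  1 / (1 + (q0 * (1 - q0) * (1 - e)) / (q1 * (1 - q1) * e)).

Definition phifun (d : nat) (th : R) (b : 'I_d -> R) (e : R) (z : 'I_d -> R) : R :=
  th * hfun th b e z + lin z b.

(* full-data likelihood of (th, b) for the outcome model times likelihood of
   g for the propensity model:
   prod_i exp(x_i th + z_i^T b)^{y_i}/(1+exp(..)) * prod_i exp(z_i^T g)^{x_i}/(1+exp(..)) *)
Definition lik (n d : nat) (y x : 'I_n -> bool) (z : 'I_n -> 'I_d -> R)
    (th : R) (b g : 'I_d -> R) : R :=
  (\prod_(i < n) (expR (b2R (x i) * th + lin (z i) b) ^+ (y i)
                    / (1 + expR (b2R (x i) * th + lin (z i) b))))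
  * (\prod_(i < n) (expR (lin (z i) g) ^+ (x i) / (1 + expR (lin (z i) g)))).

(* Posterior probability of A under the prior Pr reweighted by the likelihood L
   (posterior density proportional to prior times likelihood). *)
Definition post (dt : measure_display) (T : measurableType dt)
    (Pr : probability T R) (L : T -> R) (A : set T) : \bar R :=
  ((\int[Pr]_(t in A) (L t)%:E) * ((fine (\int[Pr]_(t in setT) (L t)%:E))^-1)%:E)%E.

Definition sigma_of (dt : measure_display) (T : measurableType dt) (I : Type)
    (f : I -> T -> R) : set (set T) :=
  <<s [set A | exists i (B : set R), measurable B /\ A = f i @^-1` B] >>.

Definition sigma_XZ (dO : measure_display) (O : measurableType dO) (n d : nat)
    (X : O -> 'I_n -> bool) (Z : O -> 'I_n -> 'I_d -> R) : set (set O) :=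
  <<s [set A | (exists i, A = [set w | X w i]) \/
               (exists i j (B : set R), measurable B /\
                   A = (fun w => Z w i j) @^-1` B)] >>.

Definition sigma_Zi (dO : measure_display) (O : measurableType dO) (n d : nat)
    (Z : O -> 'I_n -> 'I_d -> R) (i : 'I_n) : set (set O) :=
  <<s [set A | exists j (B : set R), measurable B /\
                   A = (fun w => Z w i j) @^-1` B] >>.

Definition dvn (d n : nat) : R := (maxn d n)%:R.
Definition rate (d n : nat) : R := Num.sqrt (ln (dvn d n) / n%:R).

Definition sparsity (d : nat) (b : 'I_d -> R) : nat := #|[pred j | b j != 0]|.

Definition dev1 (d : nat) (th th0 : R) (b b0 : 'I_d -> R) : R :=
  `|th - th0| + \sum_(j < d) `|b j - b0 j|.
Definition dev2 (d : nat) (th th0 : R) (b b0 : 'I_d -> R) : R :=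
  Num.sqrt ((th - th0) ^+ 2 + \sum_(j < d) (b j - b0 j) ^+ 2).

Definition Post (n d : nat) (dt : measure_display) (T : measurableType dt)
    (Pr : probability T R) (th : T -> R) (b g : T -> 'I_d -> R)
    (y x : 'I_n -> bool) (z : 'I_n -> 'I_d -> R) (A : set T) : \bar R :=
  post Pr (fun t => lik y x z (th t) (b t) (g t)) A.

End Defs.

From HB Require Import structures.
From mathcomp Require Import all_boot all_order all_algebra.
From mathcomp Require Import all_classical all_reals all_analysis.
From mathcomp Require Import measurable_realfun.
From mathcomp Require Import ring lra zify.
Import Order.TTheory GRing.Theory Num.Theory.
Import numFieldNormedType.Exports.
Local Open Scope classical_set_scope.
Local Open Scope ring_scope.

(* Write [q0 = logistic (z'b)], [q1 = logistic (th + z'b)] and [e] for the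
   propensity. Then [h = 1 - logistic (log (q0 (1 - q0)) - log (q1 (1 - q1)) - logit e)],
   and both [logistic] and [v |-> log (logistic v (1 - logistic v)) = v - 2 ln (1 + e^v)]
   are 1-Lipschitz. Hence, when [|Z_ij| <= C],
   [|h - h0| <= (2C + 1) |(th, b) - (th0, b0)|_1 + |logit e - logit e0|], and
   [|phi - phi0|] obeys a similar bound since [|h| <= 1] and [|th0| <= M0]. Outside the
   posterior tail events of (A4) and (A5) the l1 deviation is below [M1 s rate] and the
   logit deviation below [M2 rate], so the two events of the claim lie in the union of
   those tails. A union bound, for the posterior and for the data events, gives the
   claim with exponent half the smaller of [c1] and [c2]. *)

Section Logistic.
Context {R : realType}.
Implicit Types v w x y : R.

Lemma expR1D_gt0 v : 0 < 1 + expR v.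
Proof. by rewrite addr_gt0 // expR_gt0. Qed.

Lemma logisticC v : 1 - logistic v = (1 + expR v)^-1.
Proof. by rewrite /logistic; field; rewrite gt_eqF // expR1D_gt0. Qed.

Lemma logistic_gt0 v : 0 < logistic v.
Proof. by rewrite divr_gt0 ?expR_gt0 ?expR1D_gt0. Qed.

Lemma logistic_lt1 v : logistic v < 1.
Proof. by rewrite -subr_gt0 logisticC invr_gt0 expR1D_gt0. Qed.

Lemma logistic_itv v : 0 < logistic v < 1.
Proof. by rewrite logistic_gt0 logistic_lt1. Qed.

Lemma odds_logistic v : odds (logistic v) = expR v.
Proof. by rewrite /odds logisticC /logistic; field; rewrite gt_eqF // expR1D_gt0. Qed.

Lemma odds_gt0 {e : R} : 0 < e < 1 -> 0 < odds e.
Proof. by case/andP => e0 e1; rewrite divr_gt0 // subr_gt0. Qed.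

Lemma ln_odds_ratio_logistic v (e : R) : 0 < e < 1 ->
  ln (odds (logistic v) / odds e) = v - ln (odds e).
Proof.
move=> /odds_gt0 e_gt0.
by rewrite odds_logistic lnM ?posrE ?invr_gt0 ?expR_gt0 // lnV ?posrE // expRK.
Qed.

Definition log_bvar v := v - 2 * ln (1 + expR v).

Lemma logistic_bvar v : logistic v * (1 - logistic v) = expR (log_bvar v).
Proof.
rewrite logisticC /logistic /log_bvar expRD expRN -[2]/(2%:R) expRM_natl.
by rewrite lnK ?posrE ?expR1D_gt0 //; field; rewrite gt_eqF // expR1D_gt0.
Qed.

Lemma lipschitz1_of_increments (f : R -> R) :
  (forall x y, x <= y -> `|f y - f x| <= y - x) ->
  forall x y, `|f x - f y| <= `|x - y|.
Proof.
move=> inc x y; have [xy|/ltW yx] := leP x y.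
  by rewrite distrC (distrC x) (@ger0_norm _ (y - x)) ?subr_ge0 // inc.
by rewrite (@ger0_norm _ (x - y)) ?subr_ge0 // inc.
Qed.

Lemma logistic_lipschitz x y : `|logistic x - logistic y| <= `|x - y|.
Proof.
apply: lipschitz1_of_increments => {}x {}y xy.
have [ex ey] := (expR_gt0 x, expR_gt0 y).
have exy : expR x <= expR y by rewrite ler_expR.
(* Convexity of [expR]: [expR y * (1 - (y - x)) <= expR x]. *)
have tangent : expR y - expR x <= expR y * (y - x).
  have := expR_ge1Dx (x - y); rewrite expRD expRN => h.
  have := ler_wpM2l (ltW ey) h; rewrite mulrCA mulfV ?gt_eqF // mulr1.
  by move=> h'; lra.
have -> : logistic y - logistic x
          = (expR y - expR x) / ((1 + expR x) * (1 + expR y)).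
  by rewrite /logistic; field; rewrite !gt_eqF ?expR1D_gt0.
rewrite ger0_norm; last by rewrite divr_ge0 ?subr_ge0 // ltW // mulr_gt0 ?expR1D_gt0.
rewrite ler_pdivrMr ?mulr_gt0 ?expR1D_gt0 //; nra.
Qed.

Lemma log_bvar_lipschitz x y : `|log_bvar x - log_bvar y| <= `|x - y|.
Proof.
apply: lipschitz1_of_increments => {}x {}y xy.
have [hx hy] := (expR1D_gt0 x, expR1D_gt0 y).
have inc_ge0 : ln (1 + expR x) <= ln (1 + expR y).
  by rewrite ler_ln ?posrE // lerD2l ler_expR.
have inc_le : ln (1 + expR y) <= (y - x) + ln (1 + expR x).
  rewrite -[y - x]expRK -lnM ?posrE ?expR_gt0 // ler_ln ?posrE ?mulr_gt0 ?expR_gt0 //.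
  rewrite mulrDr mulr1 -expRD subrK lerD2r -expR0 ler_expR subr_ge0 //.
rewrite /log_bvar ler_norml; apply/andP; split; lra.
Qed.

Lemma hfunE {d} th (b : 'I_d -> R) (e : R) z : 0 < e < 1 ->
  hfun th b e z =
  1 - logistic (log_bvar (lin z b) - log_bvar (th + lin z b) - ln (odds e)).
Proof.
move=> e01; have ho := odds_gt0 e01; case/andP: e01 => e0 e1.
rewrite /hfun !logistic_bvar logisticC div1r; congr (1 + _)^-1.
move: (log_bvar _) (log_bvar _) => a0 a1.
rewrite !expRD !expRN lnK ?posrE // /odds.
by field; rewrite !gt_eqF ?expR_gt0 ?subr_gt0.
Qed.

Lemma hfun_logistic_norm_le1 {d} th (b : 'I_d -> R) w z :
  `|hfun th b (logistic w) z| <= 1.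
Proof.
rewrite hfunE ?logistic_itv //; set v := (_ - _ - _).
have /andP[l0 l1] := logistic_itv v.
by rewrite ger0_norm; lra.
Qed.

End Logistic.

Definition dist_const {R : realType} (C M0 M1 M2 : R) :=
  (1 + M0) * ((2 * C + 1) * M1 + M2).

Section Deviation.
Context {R : realType} {d : nat} (C : R) (z : 'I_d -> R).
Hypotheses (C_ge0 : 0 <= C) (z_le : forall j, `|z j| <= C).

Lemma lin_dist_le (b b0 : 'I_d -> R) :
  `|lin z b - lin z b0| <= C * \sum_(j < d) `|b j - b0 j|.
Proof.
rewrite /lin -sumrB mulr_sumr; apply: le_trans (ler_norm_sum _ _ _) _.
by apply: ler_sum => j _; rewrite -mulrBr normrM ler_wpM2r.
Qed.

Lemma hfun_dist_le th th0 (b b0 : 'I_d -> R) w {e : R} : 0 < e < 1 ->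
  `|hfun th b (logistic w) z - hfun th0 b0 e z|
    <= (2 * C + 1) * dev1 th th0 b b0 + `|w - ln (odds e)|.
Proof.
move=> e01; rewrite !hfunE ?logistic_itv // odds_logistic expRK.
have -> : forall a a0 : R, (1 - a) - (1 - a0) = a0 - a by move=> *; ring.
apply: le_trans (logistic_lipschitz _ _) _.
set u := lin z b; set u0 := lin z b0; set L := ln (odds e).
have du : `|u0 - u| <= C * \sum_(j < d) `|b j - b0 j| by rewrite distrC lin_dist_le.
have dthu : `|(th0 + u0) - (th + u)| <= `|th - th0| + `|u0 - u|.
  by rewrite distrC opprD addrACA (distrC u0) ler_normD.
have dA := log_bvar_lipschitz u0 u.
have dB := log_bvar_lipschitz (th0 + u0) (th + u).
have Cth := mulr_ge0 C_ge0 (normr_ge0 (th - th0)).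
have -> : log_bvar u0 - log_bvar (th0 + u0) - L - (log_bvar u - log_bvar (th + u) - w)
  = (log_bvar u0 - log_bvar u) - (log_bvar (th0 + u0) - log_bvar (th + u)) + (w - L).
  by ring.
apply: le_trans (ler_normD _ _) _; rewrite /dev1.
have := ler_normB (log_bvar u0 - log_bvar u) (log_bvar (th0 + u0) - log_bvar (th + u)).
have : 0 <= \sum_(j < d) `|b j - b0 j| by exact: sumr_ge0.
lra.
Qed.

Lemma phifun_dist_le th th0 (b b0 : 'I_d -> R) w {e : R} : 0 < e < 1 ->
  `|phifun th b (logistic w) z - phifun th0 b0 e z|
    <= (1 + C) * dev1 th th0 b b0
       + `|th0| * ((2 * C + 1) * dev1 th th0 b b0 + `|w - ln (odds e)|).
Proof.
move=> e01; rewrite /phifun.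
have dh := hfun_dist_le th th0 b b0 w e01.
have h1 := hfun_logistic_norm_le1 th b w z.
move: dh h1; set h := hfun th b _ z; set h0 := hfun th0 b0 e z => dh h1.
have -> : th * h + lin z b - (th0 * h0 + lin z b0)
  = (th - th0) * h + th0 * (h - h0) + (lin z b - lin z b0) by ring.
have dth : `|(th - th0) * h| <= `|th - th0|.
  by rewrite normrM ler_piMr.
have dth0 : `|th0 * (h - h0)| <= `|th0| * ((2 * C + 1) * dev1 th th0 b b0 + `|w - ln (odds e)|).
  by rewrite normrM ler_wpM2l.
have dl := lin_dist_le b b0.
have Cth := mulr_ge0 C_ge0 (normr_ge0 (th - th0)).
apply: le_trans (ler_normD _ _) _; apply: le_trans (lerD (ler_normD _ _) (lexx _)) _.
have : 0 <= \sum_(j < d) `|b j - b0 j| by exact: sumr_ge0.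
move: dth0; rewrite /dev1; lra.
Qed.

Lemma hfun_phifun_dist_lt th th0 (b b0 : 'I_d -> R) w (e M0 M1 M2 s r : R) :
  0 < e < 1 -> `|th0| <= M0 -> 0 < M1 -> 0 < M2 -> 1 <= s -> 0 <= r ->
  dev1 th th0 b b0 < M1 * s * r -> `|w - ln (odds e)| < M2 * r ->
  `|hfun th b (logistic w) z - hfun th0 b0 e z| < dist_const C M0 M1 M2 * s * r /\
  `|phifun th b (logistic w) z - phifun th0 b0 e z| < dist_const C M0 M1 M2 * s * r.
Proof.
move=> e01 th0M M1_gt0 M2_gt0 s_ge1 r_ge0 devD devW.
have dh := hfun_dist_le th th0 b b0 w e01.
have dphi := phifun_dist_le th th0 b b0 w e01.
move: dh dphi devD devW; rewrite /dist_const.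
set D := dev1 th th0 b b0; set W := `|w - ln (odds e)|; set K := (2 * C + 1) * M1 + M2.
move=> dh dphi devD devW.
have C1_gt0 : 0 < 2 * C + 1 by move: C_ge0; lra.
have sr_ge0 : 0 <= s * r by rewrite mulr_ge0 // (le_trans ler01).
have r_le : r <= s * r by rewrite ler_peMl.
have D_ge0 : 0 <= D by rewrite /D /dev1 addr_ge0 ?sumr_ge0.
have KD : (2 * C + 1) * D + W < K * (s * r).
  have : (2 * C + 1) * D <= (2 * C + 1) * (M1 * s * r).
    by rewrite ler_pM2l // ltW.
  have : M2 * r <= M2 * (s * r) by rewrite ler_pM2l.
  rewrite /K mulrDl -!mulrA; lra.
have M0_ge0 : 0 <= M0 := le_trans (normr_ge0 _) th0M.
have W_ge0 : 0 <= W := normr_ge0 _.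
have X_ge0 : 0 <= (2 * C + 1) * D + W by rewrite addr_ge0 ?mulr_ge0 // ltW.
have MK_ge0 : 0 <= M0 * (K * (s * r)) by rewrite mulr_ge0 // (le_trans X_ge0) ?ltW.
have th0X : `|th0| * ((2 * C + 1) * D + W) <= M0 * (K * (s * r)).
  by apply: ler_pM => //; exact: ltW.
have CD : (1 + C) * D <= (2 * C + 1) * D by rewrite ler_wpM2r //; move: C_ge0; lra.
have -> : (1 + M0) * K * s * r = K * (s * r) + M0 * (K * (s * r)) by ring.
split; lra.
Qed.

End Deviation.

Section Posterior.
Context {dt : measure_display} {T : measurableType dt} {R : realType}.
Local Open Scope ereal_scope.

Lemma ge0_le_integral_subset (mu : {measure set T -> \bar R}) (A B : set T)
    (f : T -> R) :
  (forall t, (0 <= f t)%R) -> A `<=` B ->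
  \int[mu]_(t in A) (f t)%:E <= \int[mu]_(t in B) (f t)%:E.
Proof.
move=> f_ge0 AB.
rewrite !ge0_integralE; try by move=> t _; rewrite lee_fin.
apply: ereal_sup_le => _ [h hf <-]; exists h => //= t.
apply: le_trans (hf t) _; rewrite /patch.
case: ifPn => [/set_mem/AB Bt|_]; first by rewrite mem_set.
by case: ifP; rewrite ?lee_fin.
Qed.

Lemma ge0_integral_setU_le (mu : {measure set T -> \bar R}) (A B : set T)
    (f : T -> R) :
  measurable A -> measurable B -> measurable_fun setT f -> (forall t, (0 <= f t)%R) ->
  \int[mu]_(t in A `|` B) (f t)%:E
    <= \int[mu]_(t in A) (f t)%:E + \int[mu]_(t in B) (f t)%:E.
Proof.
move=> mA mB mf f_ge0; rewrite -(setDUK (@subsetUl _ A B)).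
have mD : measurable ((A `|` B) `\` A) by apply: measurableD => //; exact: measurableU.
rewrite ge0_integral_setU //.
- by rewrite leeD2l // ge0_le_integral_subset // => t [[]].
- exact/measurable_EFinP/measurable_funTS.
- by move=> t _; rewrite lee_fin.
- by rewrite /disj_set setDE setICA setICr setI0.
Qed.

Lemma post_le_subset (Pr : probability T R) (L : T -> R) (A B : set T) :
  (forall t, (0 <= L t)%R) -> A `<=` B -> post Pr L A <= post Pr L B.
Proof.
move=> L_ge0 AB; apply: lee_wpmul2r; last exact: ge0_le_integral_subset.
by rewrite lee_fin invr_ge0 fine_ge0 // integral_ge0 // => t _; rewrite lee_fin.
Qed.

Lemma post_setU_le (Pr : probability T R) (L : T -> R) (A B : set T) :
  measurable A -> measurable B -> measurable_fun setT L -> (forall t, (0 <= L t)%R) ->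
  post Pr L (A `|` B) <= post Pr L A + post Pr L B.
Proof.
move=> mA mB mL L_ge0; rewrite /post -ge0_muleDl; first last.
- by apply: integral_ge0 => t _; rewrite lee_fin.
- by apply: integral_ge0 => t _; rewrite lee_fin.
apply: lee_wpmul2r; last exact: ge0_integral_setU_le.
by rewrite lee_fin invr_ge0 fine_ge0 // integral_ge0 // => t _; rewrite lee_fin.
Qed.

End Posterior.

Section Measurability.
Context {dt : measure_display} {T : measurableType dt} {R : realType}.
Implicit Types f : T -> R.

Lemma measurable_ge f (c : R) : measurable_fun setT f -> measurable [set t | c <= f t].
Proof.
move=> mf; have := mf measurableT `[c, +oo[%classic (measurable_itv _).
by rewrite setTI; congr measurable; apply/seteqP; split => t /=; rewrite in_itv /= andbT.
Qed.

Lemma measurable_fun_inv_pos f : measurable_fun setT f -> (forall t, 0 < f t) ->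
  measurable_fun setT (fun t => (f t)^-1).
Proof.
move=> mf f_gt0.
have -> : (fun t => (f t)^-1) = (fun t => expR (- ln (f t))).
  by apply/funext => t; rewrite expRN lnK // posrE.
apply: measurableT_comp; first exact: measurable_expR.
by apply: measurable_funN; apply: measurableT_comp => //; exact: measurable_ln.
Qed.

Lemma measurable_lin {d} (z : 'I_d -> R) (b : T -> 'I_d -> R) :
  (forall j, measurable_fun setT (fun t => b t j)) ->
  measurable_fun setT (fun t => lin z (b t)).
Proof.
move=> mb; apply: (@measurable_sum _ _ _ _ _ _ (fun j t => z j * b t j)) => j.
by apply: measurable_funM => //; exact: measurable_cst.
Qed.

Lemma measurable_dev1 {d} (th : T -> R) (b : T -> 'I_d -> R) th0 (b0 : 'I_d -> R) :
  measurable_fun setT th -> (forall j, measurable_fun setT (fun t => b t j)) ->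
  measurable_fun setT (fun t => dev1 (th t) th0 (b t) b0).
Proof.
move=> mth mb; apply: measurable_funD.
  by apply: measurableT_comp => //; apply: measurable_funB => //; exact: measurable_cst.
apply: (@measurable_sum _ _ _ _ _ _ (fun j t => `|b t j - b0 j|)) => j.
by apply: measurableT_comp => //; apply: measurable_funB => //; exact: measurable_cst.
Qed.

Lemma measurable_lik_factor f (k : nat) : measurable_fun setT f ->
  measurable_fun setT (fun t => expR (f t) ^+ k / (1 + expR (f t))).
Proof.
move=> mf; have me : measurable_fun setT (fun t => expR (f t)).
  by apply: measurableT_comp => //; exact: measurable_expR.
apply: measurable_funM; first exact: measurable_funX.
apply: measurable_fun_inv_pos => [|t]; last exact: expR1D_gt0.
by apply: measurable_funD => //; exact: measurable_cst.
Qed.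

Lemma measurable_lik {n d} (y x : 'I_n -> bool) (z : 'I_n -> 'I_d -> R)
    (th : T -> R) (b g : T -> 'I_d -> R) :
  measurable_fun setT th ->
  (forall j, measurable_fun setT (fun t => b t j)) ->
  (forall j, measurable_fun setT (fun t => g t j)) ->
  measurable_fun setT (fun t => lik y x z (th t) (b t) (g t)).
Proof.
move=> mth mb mg; apply: measurable_funM.
  apply: (@measurable_prod _ _ _ _ _ _ (fun i t =>
    expR (b2R R (x i) * th t + lin (z i) (b t)) ^+ y i
      / (1 + expR (b2R R (x i) * th t + lin (z i) (b t))))) => i _.
  apply: measurable_lik_factor; apply: measurable_funD; last exact: measurable_lin.
  by apply: measurable_funM => //; exact: measurable_cst.
apply: (@measurable_prod _ _ _ _ _ _ (fun i t =>
  expR (lin (z i) (g t)) ^+ x i / (1 + expR (lin (z i) (g t))))) => i _.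
exact/measurable_lik_factor/measurable_lin.
Qed.

End Measurability.

Lemma lik_ge0 {R : realType} {n d} (y x : 'I_n -> bool) (z : 'I_n -> 'I_d -> R) th
    (b g : 'I_d -> R) :
  0 <= lik y x z th b g.
Proof.
by apply: mulr_ge0; apply: prodr_ge0 => i _;
  rewrite divr_ge0 ?exprn_ge0 ?ltW ?expR_gt0 ?expR1D_gt0.
Qed.

Section PosteriorTail.
Context {R : realType} {dt : measure_display} {T : measurableType dt}.
Context {Pr : probability T R} {n d : nat} {th : T -> R} {b g : T -> 'I_d -> R}.
Hypotheses (mth : measurable_fun setT th)
  (mb : forall j, measurable_fun setT (fun t => b t j))
  (mg : forall j, measurable_fun setT (fun t => g t j)).
Context {y x : 'I_n -> bool} {z : 'I_n -> 'I_d -> R} (e : 'I_n -> R).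
Context {th0 : R} {b0 : 'I_d -> R}.
Local Notation posterior := (Post Pr th b g y x z).

Lemma Post_dist_tail {C M0 M1 M2 s r a1 a2 : R} :
  0 <= C -> (forall i j, `|z i j| <= C) -> (forall i, 0 < e i < 1) ->
  `|th0| <= M0 -> 0 < M1 -> 0 < M2 -> 1 <= s -> 0 <= r ->
  (posterior [set t | (M1 * r <= Num.max (dev1 (th t) th0 (b t) b0 / s)
                                    (dev2 (th t) th0 (b t) b0 / Num.sqrt s))%R]
     <= a1%:E)%E ->
  (posterior [set t | exists i, (M2 * r <=
           `|ln (odds (logistic (lin (z i) (g t))) / odds (e i))|)%R] <= a2%:E)%E ->
  (posterior [set t | exists i, (dist_const C M0 M1 M2 * s * r <=
     `|hfun (th t) (b t) (logistic (lin (z i) (g t))) (z i)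
       - hfun th0 b0 (e i) (z i)|)%R]
     <= (a1 + a2)%:E)%E /\
  (posterior [set t | exists i, (dist_const C M0 M1 M2 * s * r <=
     `|phifun (th t) (b t) (logistic (lin (z i) (g t))) (z i)
       - phifun th0 b0 (e i) (z i)|)%R]
     <= (a1 + a2)%:E)%E.
Proof.
move=> C_ge0 z_le e01 th0M M1_gt0 M2_gt0 s_ge1 r_ge0 tail1 tail2.
set L := fun t => lik y x z (th t) (b t) (g t).
have L_ge0 t : 0 <= L t := lik_ge0 _ _ _ _ _ _.
have mL : measurable_fun setT L by exact: measurable_lik.
set B1 := [set t | M1 * s * r <= dev1 (th t) th0 (b t) b0].
set B2 := \bigcup_(i in [set: 'I_n])
  [set t | M2 * r <= `|lin (z i) (g t) - ln (odds (e i))|].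
have mB1 : measurable B1 by apply/measurable_ge/measurable_dev1.
have mB2 : measurable B2.
  apply: fin_bigcup_measurable => [|i _]; first exact: finite_finset.
  apply/measurable_ge/measurableT_comp => //.
  by apply: measurable_funB; [exact: measurable_lin | exact: measurable_cst].
have PB1 : (posterior B1 <= a1%:E)%E.
  apply/(le_trans _ tail1)/post_le_subset => // t B1t /=.
  by rewrite le_max ler_pdivlMr ?(lt_le_trans ltr01) // mulrAC B1t.
have PB2 : (posterior B2 <= a2%:E)%E.
  apply/(le_trans _ tail2)/post_le_subset => // t [i _ B2t].
  by exists i; rewrite ln_odds_ratio_logistic.
have cover F : F `<=` B1 `|` B2 -> (posterior F <= (a1 + a2)%:E)%E.
  move=> FB; apply: le_trans (post_le_subset _ _ _ _ L_ge0 FB) _.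
  rewrite EFinD; apply: le_trans (leeD PB1 PB2).
  exact: post_setU_le.
have dist_lt t : ~ B1 t -> ~ B2 t -> forall i,
    `|hfun (th t) (b t) (logistic (lin (z i) (g t))) (z i) - hfun th0 b0 (e i) (z i)|
      < dist_const C M0 M1 M2 * s * r /\
    `|phifun (th t) (b t) (logistic (lin (z i) (g t))) (z i) - phifun th0 b0 (e i) (z i)|
      < dist_const C M0 M1 M2 * s * r.
  move=> /negP; rewrite -ltNge => devD nB2 i.
  apply: hfun_phifun_dist_lt => //; rewrite ltNge; apply/negP => W_ge.
  by apply: nB2; exists i.
split; apply: cover => t [i hi]; apply: contrapT => /not_orP[nB1 nB2];
  move: hi; apply/negP; rewrite -ltNge.
- exact: (dist_lt t nB1 nB2 i).1.
- exact: (dist_lt t nB1 nB2 i).2.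
Qed.

End PosteriorTail.

Lemma probability_setI_ge {dt : measure_display} {T : measurableType dt} {R : realType}
    {P : probability T R} {E1 E2 : set T} {a1 a2 : R} :
  measurable E1 -> measurable E2 ->
  ((1 - a1)%:E <= P E1)%E -> ((1 - a2)%:E <= P E2)%E ->
  ((1 - (a1 + a2))%:E <= P (E1 `&` E2))%E.
Proof.
move=> mE1 mE2.
have mE12 := measurableI _ _ mE1 mE2.
have union_bound : (P (~` E1 `|` ~` E2) <= P (~` E1) + P (~` E2))%E.
  by apply: measureU2; exact: measurableC.
move: union_bound; rewrite -setCI !probability_setC //.
rewrite -(fineK (fin_num_measure P _ mE1)) -(fineK (fin_num_measure P _ mE2)).
rewrite -(fineK (fin_num_measure P _ mE12)) -!EFinB -EFinD !lee_fin; lra.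
Qed.

Section Exponents.
Context {R : realType}.

Lemma powR_ge_eventually {a c : R} : 0 <= a -> 0 < c ->
  exists N : nat, forall x : R, N%:R <= x -> a <= x `^ c.
Proof.
move=> a_ge0 c_gt0; exists (Num.truncn (a `^ c^-1)).+1 => x Nx.
have root_lt : a `^ c^-1 < x by apply: lt_le_trans Nx; exact: truncnS_gt.
have root_ge0 : 0 <= a `^ c^-1 := powR_ge0 _ _.
rewrite -[a in a <= _](powRr1 a_ge0) -(mulVf (lt0r_neq0 c_gt0)) powRrM.
apply: ge0_ler_powR; rewrite ?nnegrE; [exact: ltW | by [] | | exact: ltW].
exact: le_trans root_ge0 (ltW root_lt).
Qed.

Lemma powRN_tails_merge {x c1 c2 C1 C2 : R} :
  1 <= x -> 0 < c1 -> 0 < c2 -> 0 <= C1 -> 0 <= C2 ->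
  2 <= x `^ (Num.min c1 c2 / 2) ->
  x `^ (- c1) + x `^ (- c2) <= x `^ (- (Num.min c1 c2 / 2)) /\
  C1 * x `^ (- c1) + C2 * x `^ (- c2) <= (C1 + C2) * x `^ (- (Num.min c1 c2 / 2)).
Proof.
move=> x_ge1 c1_gt0 c2_gt0 C1_ge0 C2_ge0; set c := Num.min c1 c2 => two_le.
have x_gt0 : 0 < x := lt_le_trans ltr01 x_ge1.
set p := x `^ (- (c / 2)).
have p_ge0 : 0 <= p := powR_ge0 _ _.
have p_le : p <= 2^-1.
  rewrite /p powRN lef_pV2 ?posrE ?powR_gt0 //; exact: lt_le_trans two_le.
have le_p2 (ci : R) : c <= ci -> x `^ (- ci) <= p * p.
  move=> c_le; have -> : p * p = x `^ (- c) by rewrite -powRD ?(gt_eqF x_gt0) ?implybT //; congr (_ `^ _); field.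
  by rewrite ler_powR // lerN2.
have [le1 le2] : x `^ (- c1) <= p * p /\ x `^ (- c2) <= p * p.
  by split; apply: le_p2; rewrite ge_min lexx ?orbT.
have pp_le : p * p <= p / 2 by nra.
split; first lra.
rewrite mulrDl; apply: lerD; apply: ler_wpM2l => //; lra.
Qed.
End Exponents.

Theorem lemma3 (R : realType)
  (dim : nat -> nat)
  (* data: (Y_i, X_i, Z_i), i < n, on a probability space for each n *)
  (dO : measure_display) (Om : nat -> measurableType dO)
  (P : forall n, probability (Om n) R)
  (Y X : forall n, Om n -> 'I_n -> bool)
  (Z : forall n, Om n -> 'I_n -> 'I_(dim n) -> R)
  (* true parameters and true propensity score *)
  (theta0 : nat -> R) (beta0 : forall n, 'I_(dim n) -> R)
  (e0 : forall n, ('I_(dim n) -> R) -> R)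
  (* prior on the draws (tilde theta, beta, gamma) *)
  (dT : measure_display) (T : nat -> measurableType dT)
  (Prior : forall n, probability (T n) R)
  (tht : forall n, T n -> R) (bet gam : forall n, T n -> 'I_(dim n) -> R)
  (pith : nat -> R -> R) (M0 : R)
  (* measurability of the data *)
  (mY : forall n i, measurable [set w | Y n w i])
  (mX : forall n i, measurable [set w | X n w i])
  (mZ : forall n i j, measurable_fun setT (fun w => Z n w i j))
  (* true propensity score: P(X_i = 1 | Z_i) = e0(Z_i), in (0,1) *)
  (e0_range : forall n z, 0 < e0 n z < 1)
  (HX : forall n i A, sigma_Zi (Z n) i A ->
     (P n (A `&` [set w | X n w i]) = \int[P n]_(w in A) (e0 n (Z n w i))%:E)%E)
  (* responses conditionally independent given (X,Z), logistic model *)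
  (HY : forall n A (y : 'I_n -> bool), sigma_XZ (X n) (Z n) A ->
     (P n (A `&` [set w | Y n w = y]) =
     \int[P n]_(w in A)
        (\prod_(i < n)
           (if y i then logistic (b2R R (X n w i) * theta0 n + lin (Z n w i) (beta0 n))
            else 1 - logistic (b2R R (X n w i) * theta0 n + lin (Z n w i) (beta0 n))))%:E)%E)
  (* prior: measurable coordinates, independent pi(theta) pi(beta) pi(gamma) *)
  (mth : forall n, measurable_fun setT (tht n))
  (mbe : forall n j, measurable_fun setT (fun t => bet n t j))
  (mga : forall n j, measurable_fun setT (fun t => gam n t j))
  (Hindep : forall n A B C,
     sigma_of (fun _ : unit => tht n) A ->
     sigma_of (fun j t => bet n t j) B ->
     sigma_of (fun j t => gam n t j) C ->
     Prior n (A `&` B `&` C) = (Prior n A * Prior n B * Prior n C)%E)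
  (* the prior of theta has Lebesgue density pith n *)
  (Hpith : forall n, (forall x, 0 <= pith n x) /\
     (forall B, measurable B ->
        (Prior n (tht n @^-1` B) = \int[lebesgue_measure]_(x in B) (pith n x)%:E)%E))
  (* s >= 1 (s = number of nonzero entries of beta0) *)
  (s_pos : forall n, (0 < sparsity (beta0 n))%N)
  (* (A1) *)
  (A1 : (fun n : nat => ln ((dim n)%:R : R) / n%:R) @ \oo --> (0 : R))
  (* (A2) *)
  (A2 : exists CZ : R, 0 < CZ /\ forall n w i j, `|Z n w i j| <= CZ)
  (* (A3) *)
  (A3 : (fun n : nat => ((sparsity (beta0 n))%:R ^+ 2 * ln (dvn R (dim n) n))
                        / Num.sqrt (n%:R : R)) @ \oo --> (0 : R))
  (* (A4) *)
  (A4 : exists M1 C1 c1 : R, 0 < M1 /\ 0 < C1 /\ 0 < c1 /\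
     exists N1, forall n, (N1 <= n)%N ->
     exists E1 : set (Om n), measurable E1 /\
       ((1 - dvn R (dim n) n `^ (- c1))%:E <= P n E1)%E /\
       forall w, E1 w ->
       (Post (Prior n) (tht n) (bet n) (gam n) (Y n w) (X n w) (Z n w)
          [set t | (M1 * rate R (dim n) n <=
             Num.max (dev1 (tht n t) (theta0 n) (bet n t) (beta0 n)
                        / (sparsity (beta0 n))%:R)
                     (dev2 (tht n t) (theta0 n) (bet n t) (beta0 n)
                        / Num.sqrt ((sparsity (beta0 n))%:R)))%R]
        <= (C1 * dvn R (dim n) n `^ (- c1))%:E)%E)
  (* (A5) *)
  (A5 : exists M2 C2 c2 : R, 0 < M2 /\ 0 < C2 /\ 0 < c2 /\
     exists N2, forall n, (N2 <= n)%N ->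
     exists E2 : set (Om n), measurable E2 /\
       ((1 - dvn R (dim n) n `^ (- c2))%:E <= P n E2)%E /\
       forall w, E2 w ->
       (Post (Prior n) (tht n) (bet n) (gam n) (Y n w) (X n w) (Z n w)
          [set t | exists i : 'I_n, (M2 * rate R (dim n) n <=
             `| ln (odds (logistic (lin (Z n w i) (gam n t)))
                    / odds (e0 n (Z n w i))) |)%R]
        <= (C2 * dvn R (dim n) n `^ (- c2))%:E)%E)
  (* (A6) *)
  (A6 : 0 < M0 /\ forall n, `|theta0 n| <= M0 /\
          {for (theta0 n), continuous (pith n)} /\ 0 < pith n (theta0 n)) :
  exists M C c3 c4 : R, 0 < M /\ 0 < C /\ 0 < c3 /\ 0 < c4 /\
  exists N, forall n, (N <= n)%N ->
    (exists E3 : set (Om n), measurable E3 /\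
       ((1 - dvn R (dim n) n `^ (- c3))%:E <= P n E3)%E /\
       forall w, E3 w ->
       (Post (Prior n) (tht n) (bet n) (gam n) (Y n w) (X n w) (Z n w)
          [set t | exists i : 'I_n, (
             M * (sparsity (beta0 n))%:R * rate R (dim n) n <=
             `| hfun (tht n t) (bet n t) (logistic (lin (Z n w i) (gam n t))) (Z n w i)
                - hfun (theta0 n) (beta0 n) (e0 n (Z n w i)) (Z n w i) |)%R]
        <= (C * dvn R (dim n) n `^ (- c3))%:E)%E) /\
    (exists E4 : set (Om n), measurable E4 /\
       ((1 - dvn R (dim n) n `^ (- c4))%:E <= P n E4)%E /\
       forall w, E4 w ->
       (Post (Prior n) (tht n) (bet n) (gam n) (Y n w) (X n w) (Z n w)
          [set t | exists i : 'I_n, (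
             M * (sparsity (beta0 n))%:R * rate R (dim n) n <=
             `| phifun (tht n t) (bet n t) (logistic (lin (Z n w i) (gam n t))) (Z n w i)
                - phifun (theta0 n) (beta0 n) (e0 n (Z n w i)) (Z n w i) |)%R]
        <= (C * dvn R (dim n) n `^ (- c4))%:E)%E).
Proof.
case: A2 => CZ [CZ_gt0 Z_le].
case: A4 => M1 [C1 [c1 [M1_gt0 [C1_gt0 [c1_gt0 [N1 tail1]]]]]].
case: A5 => M2 [C2 [c2 [M2_gt0 [C2_gt0 [c2_gt0 [N2 tail2]]]]]].
case: A6 => M0_gt0 theta0_le.
have c_gt0 : 0 < Num.min c1 c2 / 2 by rewrite divr_gt0 // lt_min c1_gt0 c2_gt0.
have [N two_le] := powR_ge_eventually (ler0n R 2) c_gt0.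
exists (dist_const CZ M0 M1 M2), (C1 + C2), (Num.min c1 c2 / 2), (Num.min c1 c2 / 2).
split; first by apply: mulr_gt0; [lra | rewrite addr_gt0 // mulr_gt0 //; lra].
do 3 (split; first by rewrite ?addr_gt0).
exists (N + N1 + N2).+1 => n n_large.
have [n_N n_N1 n_N2 n_gt0] : [/\ N <= n, N1 <= n, N2 <= n & 0 < n]%N by split; lia.
have [E1 [mE1 [PE1 post1]]] := tail1 n n_N1.
have [E2 [mE2 [PE2 post2]]] := tail2 n n_N2.
have [x_ge1 x_ge] : 1 <= dvn R (dim n) n /\ N%:R <= dvn R (dim n) n.
  by rewrite ler1n ler_nat !(leq_trans _ (leq_maxr _ _)).
have [prob_le tail_le] := powRN_tails_merge x_ge1 c1_gt0 c2_gt0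
  (ltW C1_gt0) (ltW C2_gt0) (two_le _ x_ge).
have s_ge1 : 1 <= (sparsity (beta0 n))%:R :> R by rewrite ler1n.
have tail w (E1w : E1 w) (E2w : E2 w) :=
  Post_dist_tail (mth n) (mbe n) (mga n) (fun i => e0 n (Z n w i)) (ltW CZ_gt0)
    (Z_le n w) (fun i => e0_range n _) (theta0_le n).1 M1_gt0 M2_gt0 s_ge1
    (sqrtr_ge0 _) (post1 w E1w) (post2 w E2w).
split; exists (E1 `&` E2); split; try exact: measurableI; split.
1,3: by apply: le_trans _ (probability_setI_ge mE1 mE2 PE1 PE2); rewrite lee_fin lerD2l lerN2.
- by move=> w [E1w E2w]; apply: le_trans (tail w E1w E2w).1 _; rewrite lee_fin.
- by move=> w [E1w E2w]; apply: le_trans (tail w E1w E2w).2 _; rewrite lee_fin.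
Qed.
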